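(* Let $G$ be a simple graph on $n$ vertices with $cM_2(G)\ge cM_2(H)$ for every simple graph $H$ on $n$ vertices, and let $F$, $X$, $Y$, $N^-_F$ be as defined in the context. Let $v\in Y$ with $N^-_F(v)\subseteq X$. Then for every $u\in X$ with $uv\in E(G)$, the arc $\overrightarrow{uv}$ belongs to $F$.
   Context: All graphs are finite and simple; $d_G(u)$ is the degree of $u$ and $cM_2(G)=\sum_{uv\in E(G)}|d_G(u)^2-d_G(v)^2|$. The canonical mixed graph $F$ of $G$ has vertex set $V(G)$; for each edge $uv\in E(G)$: if $d_G(u)>d_G(v)$ then $F$ contains the arc $\overrightarrow{uv}$, and if $d_G(u)=d_G(v)$ then $F$ contains the undirected edge $uv$. $d^+_F(u)$ (resp. $d^-_F(u)$) is the number of arcs of $F$ with tail (resp. head) $u$; $N^+_F(u)=\{w:\overrightarrow{uw}\in A(F)\}$ and $N^-_F(u)=\{w:\overrightarrow{wu}\in A(F)\}$. $X=\{u\in V(G): d^+_F(u)\ge d^-_F(u)\}$ and $Y=\{u\in V(G): d^+_F(u)< d^-_F(u)\}$. *)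

From mathcomp Require Import all_boot.
Set Implicit Arguments. Unset Strict Implicit. Unset Printing Implicit Defensive.

Definition simple_graph (n : nat) (e : rel 'I_n) : Prop :=
  symmetric e /\ irreflexive e.

Definition deg (n : nat) (e : rel 'I_n) (u : 'I_n) : nat := #|[set w | e u w]|.

Definition natdist (a b : nat) : nat := (a - b) + (b - a).

Definition cM2 (n : nat) (e : rel 'I_n) : nat :=
  \sum_(u : 'I_n) \sum_(v : 'I_n | (u < v) && e u v)
     natdist (deg e u ^ 2) (deg e v ^ 2).

Definition arcF (n : nat) (e : rel 'I_n) (u v : 'I_n) : bool :=
  e u v && (deg e v < deg e u).

Definition outdegF (n : nat) (e : rel 'I_n) (u : 'I_n) : nat :=
  #|[set w | arcF e u w]|.
Definition indegF (n : nat) (e : rel 'I_n) (u : 'I_n) : nat :=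
  #|[set w | arcF e w u]|.

Definition inNbF (n : nat) (e : rel 'I_n) (u : 'I_n) : {set 'I_n} :=
  [set w | arcF e w u].

Definition Xset (n : nat) (e : rel 'I_n) : {set 'I_n} :=
  [set u | indegF e u <= outdegF e u].
Definition Yset (n : nat) (e : rel 'I_n) : {set 'I_n} :=
  [set u | outdegF e u < indegF e u].

From mathcomp Require Import all_boot all_order all_algebra zify.
Import Order.TTheory GRing.Theory Num.Theory.
Set Implicit Arguments. Unset Strict Implicit. Unset Printing Implicit Defensive.
Local Open Scope ring_scope.

(* Suppose d(u) <= d(v).  If some in-neighbour w of v is not adjacent to u,
   then u, w are in X and d(w) > d(v) >= d(u).  Adding the edge uw raises both
   degrees by one; a vertex of X has at least as many lower- as higher-degree
   neighbours, so its other terms |d^2 - d'^2| do not decrease in total, while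
   the new term |d(u)^2 - d(w)^2| is positive: cM_2 grows.  Otherwise every
   in-neighbour of v is adjacent to u, so N^-(v) is contained in N^-(u), and
   also contains v when d(u) < d(v).  Deleting uv lowers both degrees; since v
   is in Y and u in X with at least as many in-neighbours, the gains at the
   terms around u and v outweigh the loss of |d(u)^2 - d(v)^2|, and cM_2 grows
   again.  Both contradict maximality. *)

Definition b2i (b : bool) : int := if b then 1 else 0.

Lemma card_set_sum_b2i (T : finType) (P : pred T) :
  (#|[set b | P b]|)%:Z = \sum_b b2i (P b).
Proof.
rewrite -sum1_card -natz natr_sum big_mkcond /=.
by apply: eq_bigr => b _; rewrite inE /b2i; case: (P b).
Qed.

Lemma natdist_sq_succ_ge (x y : nat) :
  (2 * x%:Z + 1) * (b2i (y < x)%N - b2i (x < y)%N) <=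
  (natdist (x.+1 ^ 2) (y ^ 2))%:Z - (natdist (x ^ 2) (y ^ 2))%:Z.
Proof.
rewrite /natdist /b2i -!mulnn; case: (ltngtP x y) => h.
- have := leq_mul h h; have := leq_mul (ltnW h) (ltnW h); nia.
- have : (y * y <= x.+1 * x.+1)%N by apply: leq_mul; lia.
  have := leq_mul (ltnW h) (ltnW h); nia.
- subst y; nia.
Qed.

Lemma natdist_sq_pred_ge (x y : nat) : (0 < x)%N ->
  (2 * x%:Z - 1) * (b2i (x < y)%N + b2i (y == x) - b2i (y < x)%N) <=
  (natdist (x.-1 ^ 2) (y ^ 2))%:Z - (natdist (x ^ 2) (y ^ 2))%:Z.
Proof.
case: x => // x _; rewrite /natdist /b2i /= -!mulnn; case: (ltngtP x.+1 y) => h.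
- have : (x * x <= y * y)%N by apply: leq_mul; lia.
  have := leq_mul (ltnW h) (ltnW h); nia.
- have := leq_mul (ltnW h) (ltnW h); case: (leqP y x) => h3.
  + have := leq_mul h3 h3; nia.
  + have : y = x.+1 by lia.
    lia.
- nia.
Qed.

Section DoubleSum.
Variable n : nat.

Definition cM2_term (h : rel 'I_n) (a b : 'I_n) : nat :=
  if h a b then natdist (deg h a ^ 2) (deg h b ^ 2) else 0%N.

Lemma cM2_termC (h : rel 'I_n) : symmetric h ->
  forall a b, cM2_term h a b = cM2_term h b a.
Proof. by move=> hs a b; rewrite /cM2_term hs /natdist addnC. Qed.

Lemma cM2_double (h : rel 'I_n) : simple_graph h ->
  (2 * cM2 h = \sum_a \sum_b cM2_term h a b)%N.
Proof.
move=> [hs hi].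
have diag_split a : (\sum_b cM2_term h a b =
    \sum_(b : 'I_n | (a < b)%N) cM2_term h a b
  + \sum_(b : 'I_n | (b < a)%N) cM2_term h a b)%N.
  rewrite (bigID (fun b : 'I_n => (a < b)%N)) /=; congr (_ + _)%N.
  rewrite (bigID (fun b : 'I_n => (b < a)%N)) /= [X in (_ + X)%N]big1 ?addn0.
    by apply: eq_bigl => b; case: (ltngtP a b).
  move=> b /andP[h1 h2]; have -> : b = a.
    by apply: val_inj; move: h1 h2; case: (ltngtP a b).
  by rewrite /cM2_term hi.
have lower_eq_upper : (\sum_(a : 'I_n) \sum_(b : 'I_n | (b < a)%N) cM2_term h a b =
                       \sum_(a : 'I_n) \sum_(b : 'I_n | (a < b)%N) cM2_term h a b)%N.
  rewrite (eq_bigr (fun a : 'I_n => \sum_(b : 'I_n) if (b < a)%N then cM2_term h a b else 0%N));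
    last by move=> a _; rewrite big_mkcond.
  rewrite exchange_big /=; apply: eq_bigr => a _; rewrite [RHS]big_mkcond /=.
  by apply: eq_bigr => b _; case: ifP => // _; rewrite cM2_termC.
under eq_bigr => a _ do rewrite diag_split.
rewrite big_split /= lower_eq_upper addnn -mul2n /cM2; congr (2 * _)%N.
by apply: eq_bigr => a _; rewrite big_mkcondr.
Qed.

End DoubleSum.

Section Toggle.
Variables (n : nat) (e : rel 'I_n) (p q : 'I_n).

Definition toggle : rel 'I_n := fun a b =>
  if ((a == p) && (b == q)) || ((a == q) && (b == p)) then ~~ e a b else e a b.

Hypothesis pq : p != q.

Lemma toggle_simple : simple_graph e -> simple_graph toggle.
Proof.
move=> [hs hi]; split.
  by move=> a b; rewrite /toggle hs (andbC (b == p)) (andbC (b == q)) orbC.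
move=> a; rewrite /toggle hi; case: ifP => //.
by case/orP => /andP[/eqP -> /eqP h]; move: pq; rewrite h eqxx.
Qed.

Lemma toggle_away a b : a != p -> a != q -> toggle a b = e a b.
Proof. by move=> ap aq; rewrite /toggle (negbTE ap) (negbTE aq). Qed.

Lemma deg_toggle_away a : a != p -> a != q -> deg toggle a = deg e a.
Proof.
by move=> ap aq; rewrite /deg; apply: eq_card => b; rewrite !inE toggle_away.
Qed.

Lemma toggle_pb b : b != q -> toggle p b = e p b.
Proof. by move=> bq; rewrite /toggle eqxx (negbTE bq) (negbTE pq). Qed.

Lemma toggle_pq : toggle p q = ~~ e p q.
Proof. by rewrite /toggle !eqxx. Qed.

Lemma deg_toggle_p : deg toggle p = if e p q then (deg e p).-1 else (deg e p).+1.
Proof.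
rewrite /deg; case epq: (e p q).
  have -> : [set b | toggle p b] = [set b | e p b] :\ q.
    apply/setP => b; rewrite !inE; case: (eqVneq b q) => [->|bq].
      by rewrite toggle_pq epq.
    by rewrite toggle_pb.
  by rewrite [in RHS](cardsD1 q) inE epq.
have -> : [set b | toggle p b] = q |: [set b | e p b].
  apply/setP => b; rewrite !inE; case: (eqVneq b q) => [->|bq].
    by rewrite toggle_pq epq.
  by rewrite toggle_pb.
by rewrite cardsU1 inE epq.
Qed.

End Toggle.

Lemma toggleC n (e : rel 'I_n) p q a b : toggle e p q a b = toggle e q p a b.
Proof. by rewrite /toggle orbC. Qed.

Lemma deg_toggleC n (e : rel 'I_n) p q a : deg (toggle e p q) a = deg (toggle e q p) a.
Proof. by rewrite /deg; apply: eq_card => b; rewrite !inE toggleC. Qed.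

Lemma cM2_term_toggleC n (e : rel 'I_n) p q a b :
  cM2_term (toggle e p q) a b = cM2_term (toggle e q p) a b.
Proof. by rewrite /cM2_term toggleC !(deg_toggleC e p q). Qed.

Section PairSums.
Variables (n : nat) (p q : 'I_n).
Hypothesis pq : p != q.

Lemma sum_split_pair (f : 'I_n -> int) :
  \sum_b f b = f p + f q + \sum_(b | (b != p) && (b != q)) f b.
Proof.
rewrite (bigD1 p) //= (bigD1 q) //=; last by rewrite eq_sym.
by rewrite addrA; congr (_ + _); apply: eq_bigl => b; rewrite andbC.
Qed.

Lemma ler_sum_off_pair (f c : 'I_n -> int) :
  (forall b, b != p -> b != q -> c b <= f b) ->
  f p + f q + \sum_b c b - c p - c q <= \sum_b f b.
Proof.
move=> H; rewrite (sum_split_pair f) (sum_split_pair c).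
have : \sum_(b | (b != p) && (b != q)) c b <= \sum_(b | (b != p) && (b != q)) f b.
  by apply: ler_sum => b /andP[]; apply: H.
lia.
Qed.

Lemma double_sum_local (F : 'I_n -> 'I_n -> int) :
  (forall a b, a != p -> a != q -> b != p -> b != q -> F a b = 0) ->
  (forall a b, F a b = F b a) -> F p p = 0 -> F q q = 0 ->
  \sum_a \sum_b F a b = 2 * \sum_b F p b + 2 * \sum_b F q b - 2 * F p q.
Proof.
move=> F0 FC Fpp Fqq.
rewrite [LHS]sum_split_pair.
have -> : \sum_(a | (a != p) && (a != q)) \sum_b F a b =
          \sum_(a | (a != p) && (a != q)) F p a + \sum_(a | (a != p) && (a != q)) F q a.
  rewrite -big_split /=; apply: eq_bigr => a /andP[ap aq].
  rewrite sum_split_pair big1 ?addr0 ?(FC a p) ?(FC a q) //.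
  by move=> b /andP[bp bq]; apply: F0.
rewrite (sum_split_pair (F p)) (sum_split_pair (F q)) (FC q p) Fpp Fqq.
lia.
Qed.

End PairSums.

(* Degree bookkeeping for deleting an edge pq with d(q) <= d(p): i, o, t are
   the in-, out- and undirected degrees in F. *)
Lemma deletion_gain_gt0_lt (dp dq ip op tp iq oq tq : int) :
  0 <= ip -> 0 <= op -> 0 <= tp -> 0 <= iq -> 0 <= oq -> 0 <= tq ->
  dp = ip + op + tp -> dq = iq + oq + tq -> op < ip -> iq <= oq ->
  dq < dp -> ip + 1 <= iq ->
  0 < - (dp * dp - dq * dq) + (2 * dp - 1) * (ip + tp - op + 1)
      + (2 * dq - 1) * (iq + tq - oq - 1).
Proof.
move=> *.
have : (2 * dp - 1) * (dp - 2 * ip + 3) <= (2 * dp - 1) * (ip + tp - op + 1).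
  by apply: ler_wpM2l; lia.
have : (2 * dq - 1) * (2 * ip + 1 - dq) <= (2 * dq - 1) * (iq + tq - oq - 1).
  by apply: ler_wpM2l; lia.
have : 0 <= (dp - dq) * (dq - 2 - 2 * ip) by apply: mulr_ge0; lia.
nia.
Qed.

Lemma deletion_gain_gt0_eq (dp ip op tp iq oq tq : int) :
  0 <= ip -> 0 <= op -> 0 <= tp -> 0 <= iq -> 0 <= oq -> 0 <= tq ->
  dp = ip + op + tp -> dp = iq + oq + tq -> op < ip -> iq <= oq ->
  ip <= iq -> 1 <= tq ->
  0 < (2 * dp - 1) * (ip + tp - op - 1) + (2 * dp - 1) * (iq + tq - oq - 1).
Proof.
move=> *.
have : 0 < (2 * dp - 1) * (ip + tp - op + iq + tq - oq - 2) by apply: mulr_gt0; lia.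
nia.
Qed.

Section Gain.
Variables (n : nat) (e : rel 'I_n).
Hypotheses (hse : symmetric e) (hie : irreflexive e).

Definition gain (h : rel 'I_n) (a b : 'I_n) : int :=
  (cM2_term h a b)%:Z - (cM2_term e a b)%:Z.

Definition row_gain (h : rel 'I_n) (a : 'I_n) : int := \sum_b gain h a b.

Definition undegF (u : 'I_n) : nat := #|[set b | e u b && (deg e b == deg e u)]|.

Lemma cM2_toggle_diff p q : p != q ->
  (2 * cM2 (toggle e p q))%N%:Z - (2 * cM2 e)%N%:Z =
  2 * row_gain (toggle e p q) p + 2 * row_gain (toggle e q p) q
  - 2 * gain (toggle e p q) p q.
Proof.
move=> pq; have sT := toggle_simple pq (conj hse hie); have [hsT hiT] := sT.
have double_int (h : rel 'I_n) : simple_graph h ->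
    (2 * cM2 h)%N%:Z = \sum_a \sum_b (cM2_term h a b)%:Z.
  move=> sh; rewrite cM2_double // -natz natr_sum; apply: eq_bigr => a _.
  by rewrite natr_sum; apply: eq_bigr => b _; rewrite natz.
rewrite (double_int _ sT) (double_int _ (conj hse hie)).
rewrite -sumrB; under eq_bigr => a _ do rewrite -sumrB.
rewrite (double_sum_local pq (F := gain (toggle e p q))).
- rewrite /row_gain; congr (_ + 2 * _ - _); apply: eq_bigr => b _.
  by rewrite /gain cM2_term_toggleC.
- move=> a b ap aq bp bq.
  by rewrite /gain /cM2_term toggle_away // !deg_toggle_away // subrr.
- by move=> a b; rewrite /gain (cM2_termC hsT) (cM2_termC hse).
- by rewrite /gain /cM2_term hiT hie subrr.
- by rewrite /gain /cM2_term hiT hie subrr.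
Qed.

Lemma gain_toggle_swap p q : q != p ->
  gain (toggle e q p) q p = gain (toggle e p q) p q.
Proof.
move=> qp; have [hsT _] := toggle_simple qp (conj hse hie).
by rewrite /gain (cM2_termC hsT q p) cM2_term_toggleC (cM2_termC hse q p).
Qed.

Lemma gain_toggle_diag p q : p != q -> gain (toggle e p q) p p = 0.
Proof.
move=> pq; have [_ hiT] := toggle_simple pq (conj hse hie).
by rewrite /gain /cM2_term hiT hie subrr.
Qed.

Lemma deg_splitF u : deg e u = (indegF e u + outdegF e u + undegF u)%N.
Proof.
suff : (deg e u)%:Z = (indegF e u)%:Z + (outdegF e u)%:Z + (undegF u)%:Z by lia.
rewrite /deg /indegF /outdegF /undegF !card_set_sum_b2i -!big_split /=.
apply: eq_bigr => b _; rewrite /arcF (hse b u) /b2i.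
by case: (e u b) => //=; case: (ltngtP (deg e u) (deg e b)).
Qed.

(* Raising d(p) by one moves each other term at p by at least 2 d(p) + 1, up
   along out-arcs of p and down along in-arcs; for p in X the out-arcs win. *)
Lemma row_gain_add p q : p != q -> ~~ e p q -> p \in Xset e ->
  gain (toggle e p q) p q <= row_gain (toggle e p q) p.
Proof.
move=> pq epq; rewrite inE => pX.
pose c b := (2 * (deg e p)%:Z + 1) * (b2i (arcF e p b) - b2i (arcF e b p)).
have sum_c : \sum_b c b = (2 * (deg e p)%:Z + 1) * ((outdegF e p)%:Z - (indegF e p)%:Z).
  by rewrite -mulr_sumr sumrB /outdegF /indegF !card_set_sum_b2i.
have cp : c p = 0 by rewrite /c /arcF hie subrr mulr0.
have cq : c q = 0 by rewrite /c /arcF (hse q p) (negbTE epq) subrr mulr0.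
have term_ge b : b != p -> b != q -> c b <= gain (toggle e p q) p b.
  move=> bp bq; rewrite /c /gain /cM2_term (toggle_pb e pq bq).
  rewrite (deg_toggle_away e bp bq) (deg_toggle_p e pq) (negbTE epq) /arcF (hse b p).
  by case: (e p b) => /=; [exact: natdist_sq_succ_ge | rewrite subrr mulr0].
have := ler_sum_off_pair pq term_ge.
rewrite cp cq gain_toggle_diag // sum_c.
have : 0 <= (2 * (deg e p)%:Z + 1) * ((outdegF e p)%:Z - (indegF e p)%:Z).
  by apply: mulr_ge0; lia.
rewrite /row_gain; lia.
Qed.

(* The last summand discards the estimate for the term at q itself, which the
   deletion removes. *)
Lemma row_gain_del p q : p != q -> e p q ->
  gain (toggle e p q) p q + (2 * (deg e p)%:Z - 1) *
    ((indegF e p)%:Z + (undegF p)%:Z - (outdegF e p)%:Z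
     - (if (deg e q < deg e p)%N then -1 else 1))
  <= row_gain (toggle e p q) p.
Proof.
move=> pq epq.
pose c b := (2 * (deg e p)%:Z - 1) *
  (b2i (arcF e b p) + b2i (e p b && (deg e b == deg e p)) - b2i (arcF e p b)).
have sum_c : \sum_b c b =
    (2 * (deg e p)%:Z - 1) * ((indegF e p)%:Z + (undegF p)%:Z - (outdegF e p)%:Z).
  by rewrite -mulr_sumr sumrB big_split /= /outdegF /indegF /undegF !card_set_sum_b2i.
have cp : c p = 0 by rewrite /c /arcF hie /= subrr mulr0.
have cq : c q = (2 * (deg e p)%:Z - 1) * (if (deg e q < deg e p)%N then -1 else 1).
  rewrite /c /arcF (hse q p) epq /= /b2i.
  by case: (ltngtP (deg e q) (deg e p)) => _ /=; lia.
have dp_gt0 : (0 < deg e p)%N by apply/card_gt0P; exists q; rewrite inE.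
have term_ge b : b != p -> b != q -> c b <= gain (toggle e p q) p b.
  move=> bp bq; rewrite /c /gain /cM2_term (toggle_pb e pq bq).
  rewrite (deg_toggle_away e bp bq) (deg_toggle_p e pq) epq /arcF (hse b p).
  by case: (e p b) => /=; [exact: natdist_sq_pred_ge | rewrite !subrr mulr0].
have := ler_sum_off_pair pq term_ge.
rewrite cp cq gain_toggle_diag // sum_c /row_gain; lia.
Qed.

Lemma inNbF_subset p q : (deg e q <= deg e p)%N ->
  (forall w, arcF e w p -> e q w) -> inNbF e p \subset inNbF e q.
Proof.
move=> qp sub; apply/subsetP => w; rewrite !inE => wp.
have [_ dpw] := andP wp.
by rewrite /arcF hse sub //=; apply: leq_ltn_trans dpw.
Qed.

Lemma cM2_toggle_add_gt p q : p != q -> ~~ e p q ->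
  p \in Xset e -> q \in Xset e -> deg e p != deg e q ->
  (cM2 e < cM2 (toggle e p q))%N.
Proof.
move=> pq epq pX qX dpq.
have qp : q != p by rewrite eq_sym.
have eqp : ~~ e q p by rewrite hse.
have row_p := row_gain_add pq epq pX.
have row_q := row_gain_add qp eqp qX; rewrite gain_toggle_swap // in row_q.
have gain_pq : 0 < gain (toggle e p q) p q.
  rewrite /gain /cM2_term (toggle_pq e) (negbTE epq) /= (deg_toggle_p e pq).
  rewrite (deg_toggleC e p q q) (deg_toggle_p e qp) (negbTE epq) (negbTE eqp).
  rewrite /natdist -!mulnn; move: dpq.
  by case: (ltngtP (deg e p) (deg e q)) => // h _; have := leq_mul h h; nia.
have := cM2_toggle_diff pq; lia.
Qed.

Lemma cM2_toggle_del_gt p q : p != q -> e p q ->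
  p \in Yset e -> q \in Xset e -> (deg e q <= deg e p)%N ->
  (forall w, arcF e w p -> e q w) -> (cM2 e < cM2 (toggle e p q))%N.
Proof.
move=> pq epq pY qX dqp sub.
have qp : q != p by rewrite eq_sym.
have eqp : e q p by rewrite hse.
have row_p := row_gain_del pq epq.
have row_q := row_gain_del qp eqp; rewrite gain_toggle_swap // in row_q.
have gain_pq : gain (toggle e p q) p q =
    - ((deg e p)%:Z * (deg e p)%:Z - (deg e q)%:Z * (deg e q)%:Z).
  rewrite /gain /cM2_term (toggle_pq e) epq /= /natdist -!mulnn.
  by have := leq_mul dqp dqp; nia.
have in_sub : inNbF e p \subset inNbF e q by exact: inNbF_subset.
have diff := cM2_toggle_diff pq.
have := deg_splitF p; have := deg_splitF q.
move: pY qX; rewrite !inE => pY qX.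
have [dq_lt | dq_eq] : (deg e q < deg e p)%N \/ deg e q = deg e p by lia.
- rewrite dq_lt in row_p; rewrite ltnNge (ltnW dq_lt) /= in row_q.
  have : (indegF e p < indegF e q)%N.
    apply: proper_card; apply/properP; split=> //.
    by exists p; rewrite ?inE /arcF ?epq ?dq_lt ?hie.
  have := @deletion_gain_gt0_lt (deg e p) (deg e q) (indegF e p) (outdegF e p)
            (undegF p) (indegF e q) (outdegF e q) (undegF q).
  lia.
- rewrite dq_eq ltnn in row_p row_q gain_pq.
  have tie_q : (0 < undegF q)%N.
    by apply/card_gt0P; exists p; rewrite inE eqp dq_eq eqxx.
  have : (indegF e p <= indegF e q)%N := subset_leq_card in_sub.
  have := @deletion_gain_gt0_eq (deg e p) (indegF e p) (outdegF e p) (undegF p)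
            (indegF e q) (outdegF e q) (undegF q).
  lia.
Qed.

End Gain.

Local Close Scope ring_scope.

Theorem claim3 (n : nat) (e : rel 'I_n) :
  simple_graph e ->
  (forall h : rel 'I_n, simple_graph h -> cM2 h <= cM2 e) ->
  forall v : 'I_n, v \in Yset e -> inNbF e v \subset Xset e ->
  forall u : 'I_n, u \in Xset e -> e u v -> arcF e u v.
Proof.
move=> [hs hi] hmax v vY inv_X u uX euv.
rewrite /arcF euv /=; case: (ltnP (deg e v) (deg e u)) => // dvu.
have not_gt q r : q != r -> ~ (cM2 e < cM2 (toggle e q r)).
  by move=> qr; have := hmax _ (toggle_simple qr (conj hs hi)); lia.
case: (boolP [exists w, arcF e w v && ~~ e u w]).
- case/existsP => w /andP[wv euw].
  have wX : w \in Xset e by apply: (subsetP inv_X); rewrite inE.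
  have dvw : deg e v < deg e w by case/andP: wv.
  have dne : deg e u != deg e w by rewrite neq_ltn (leq_ltn_trans dvu dvw).
  have uw : u != w by apply: contraNneq dne => ->.
  by case: (not_gt _ _ uw); apply: cM2_toggle_add_gt.
- move=> /existsPn no_w.
  have vu : v != u by apply: contraTneq euv => ->; rewrite hi.
  have sub w : arcF e w v -> e u w by move=> wv; move: (no_w w); rewrite wv negbK.
  by case: (not_gt _ _ vu); apply: cM2_toggle_del_gt; rewrite // hs.
Qed.
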